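(* Let $H\in\mathbb{R}^{n\times n}$ be symmetric with $\lambda_{\min}(H)<0$ and unit eigenvector $v_1$ for $\lambda_{\min}(H)$, let $g\in\mathbb{R}^n$ with $g^\intercal v_1\neq0$, let $f(z)=\frac12z^\intercal Hz+g^\intercal z$ and $\beta=\|H\|_{\mathrm{op}}$. Let $0<\eta<1/\beta$ and $z_0=-\alpha\frac{g}{\|g\|}$ with $0<\alpha<\min\big(1,\frac{\|g\|^3}{|g^\intercal Hg|}\big)$, and let $z_{s+1}=z_s-\eta\nabla f(z_s)$ for $s\ge0$. Suppose $t$ is such that $\|z_s\|\le 1$ for $s=0,\dots,t$ and $z_t^\intercal\nabla f(z_t)\le 0$. Then $z_t^\intercal H\nabla f(z_t)\ge \beta\, z_t^\intercal\nabla f(z_t)$.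
   Context: $\nabla f(z)=Hz+g$; $\|H\|_{\mathrm{op}}$ is the operator norm. *)

From HB Require Import structures.
From mathcomp Require Import all_boot all_order all_algebra.
From mathcomp Require Import reals.
Set Implicit Arguments. Unset Strict Implicit. Unset Printing Implicit Defensive.
Import Order.TTheory GRing.Theory Num.Theory.
Local Open Scope ring_scope.

Definition dotv (R : realType) (n : nat) (u v : 'cV[R]_n) : R :=
  (u^T *m v) 0 0.
Definition vnorm (R : realType) (n : nat) (u : 'cV[R]_n) : R :=
  Num.sqrt (dotv u u).

Definition opnorm (R : realType) (n : nat) (H : 'M[R]_n) : R :=
  sup (fun r : R => exists x : 'cV[R]_n, vnorm x = 1 /\ r = vnorm (H *m x)).

(* gradient of f(z) = 1/2 z^T H z + g^T z *)
Definition gradf (R : realType) (n : nat) (H : 'M[R]_n) (g z : 'cV[R]_n)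
  : 'cV[R]_n := H *m z + g.

Fixpoint gd_iter (R : realType) (n : nat) (H : 'M[R]_n) (g z0 : 'cV[R]_n)
  (eta : R) (s : nat) : 'cV[R]_n :=
  match s with
  | O => z0
  | S s' => let z := gd_iter H g z0 eta s' in z - eta *: gradf H g z
  end.

From HB Require Import structures.
From mathcomp Require Import all_boot all_order all_algebra.
From mathcomp Require Import boolp classical_sets reals.
From mathcomp Require Import ring lra.
Set Implicit Arguments. Unset Strict Implicit. Unset Printing Implicit Defensive.
Import Order.TTheory GRing.Theory Num.Theory.
Local Open Scope ring_scope.

(* Started at -a g, gradient descent stays in the Krylov space of g:
   z_t = -c_t(H) g for a polynomial c_t ([gd_poly]), and grad f(z_t) = u_t(H) g with
   u_t = 1 - X c_t = (1 - eta X)^t (1 - a X).  The claim becomes g^T p(H) g >= 0 for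
   p = c_t (beta - X) u_t.  As H is symmetric, the polynomials p with p(H) positive
   semidefinite form a convex cone closed under p |-> s p s.  It contains beta - X,
   and 1 - eta X = eta (beta - X) + (1 - eta beta), hence c_t (1 - eta X)^t and
   c_t (1 - eta X)^t (beta - X) by induction on t.  If a beta <= 1, then
   1 - a X = a (beta - X) + (1 - a beta) puts p in the cone.  Otherwise
   a p = c_t (1 - eta X)^t (1 - a X)^2 + (a beta - 1) c_t u_t, and the hypothesis
   z_t^T grad f(z_t) <= 0 says exactly that g^T (c_t u_t)(H) g >= 0.  Only these facts
   (with a >= 0) are used. *)

Section InnerProduct.
Variables (R : realType) (n : nat).
Implicit Types (u v w : 'cV[R]_n) (A : 'M[R]_n).

Lemma dotvC u v : dotv u v = dotv v u.
Proof. by rewrite /dotv !mxE; apply: eq_bigr => i _; rewrite !mxE mulrC. Qed.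

Lemma dotvDr u v w : dotv u (v + w) = dotv u v + dotv u w.
Proof. by rewrite /dotv mulmxDr mxE. Qed.

Lemma dotvZr k u v : dotv u (k *: v) = k * dotv u v.
Proof. by rewrite /dotv -scalemxAr mxE. Qed.

Lemma dotvNr u v : dotv u (- v) = - dotv u v.
Proof. by rewrite /dotv mulmxN mxE. Qed.

Lemma dotvBr u v w : dotv u (v - w) = dotv u v - dotv u w.
Proof. by rewrite dotvDr dotvNr. Qed.

Lemma dotv0r u : dotv u 0 = 0.
Proof. by rewrite /dotv mulmx0 mxE. Qed.

Lemma dotvZl k u v : dotv (k *: u) v = k * dotv u v.
Proof. by rewrite dotvC dotvZr dotvC. Qed.

Lemma dotvNl u v : dotv (- u) v = - dotv u v.
Proof. by rewrite dotvC dotvNr dotvC. Qed.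

Lemma dotvBl u v w : dotv (u - v) w = dotv u w - dotv v w.
Proof. by rewrite dotvC dotvBr dotvC [dotv w v]dotvC. Qed.

Lemma dotv_mulmxr A u v : dotv u (A *m v) = dotv (A^T *m u) v.
Proof. by rewrite /dotv trmx_mul trmxK mulmxA. Qed.

Lemma dotvv_ge0 u : 0 <= dotv u u.
Proof.
by rewrite /dotv mxE; apply: sumr_ge0 => i _; rewrite !mxE -expr2 sqr_ge0.
Qed.

Lemma dotvv_eq0 u : dotv u u = 0 -> u = 0.
Proof.
rewrite /dotv mxE => /psumr_eq0P sq0; apply/matrixP => i j; rewrite ord1 !mxE.
have /eqP := sq0 (fun k _ => ltac:(rewrite !mxE -expr2; exact: sqr_ge0)) i isT.
by rewrite !mxE mulf_eq0 orbb => /eqP.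
Qed.

Lemma vnorm_eq1 u : vnorm u = 1 -> dotv u u = 1.
Proof. by rewrite /vnorm => /(congr1 (fun r => r ^+ 2)); rewrite sqr_sqrtr ?dotvv_ge0 ?expr1n. Qed.

End InnerProduct.

Section OperatorNorm.
Variables (R : realType) (n : nat) (H : 'M[R]_n).
Hypothesis opnorm_gt0 : 0 < opnorm H.

Lemma vnorm_mulmx_le_opnorm x : vnorm x = 1 -> vnorm (H *m x) <= opnorm H.
Proof.
move=> x1.
set E := (fun r : R => exists x : 'cV[R]_n, vnorm x = 1 /\ r = vnorm (H *m x)).
(* without a supremum, [sup] would return 0 *)
have supE : has_sup E.
  apply: contrapT => noSup; move: opnorm_gt0.
  by rewrite /opnorm -/E sup_out // ltxx.
by apply: (sup_upper_bound supE); exists x.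
Qed.

Lemma dotv_mulmx_le_opnorm_unit y : vnorm y = 1 -> dotv y (H *m y) <= opnorm H.
Proof.
move=> y1; set b := opnorm H.
have yy1 := vnorm_eq1 y1.
have HyHy : dotv (H *m y) (H *m y) <= b ^+ 2.
  rewrite -[dotv _ _]sqr_sqrtr ?dotvv_ge0 // -/(vnorm _).
  rewrite lerXn2r ?nnegrE ?sqrtr_ge0 ?(ltW opnorm_gt0) //.
  exact: vnorm_mulmx_le_opnorm.
(* 0 <= |b y - H y|^2 <= 2 b^2 - 2 b y^T H y *)
have := dotvv_ge0 (b *: y - H *m y).
rewrite dotvBl !dotvBr !dotvZl !dotvZr [dotv (H *m y) y]dotvC yy1.
have b_gt0 : 0 < b := opnorm_gt0.
nra.
Qed.

Lemma dotv_mulmx_le_opnorm x : dotv x (H *m x) <= opnorm H * dotv x x.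
Proof.
have [xx0|xx0] := eqVneq (dotv x x) 0.
  by rewrite (dotvv_eq0 xx0) mulmx0 !dotv0r mulr0.
have xx_gt0 : 0 < dotv x x by rewrite lt_neqAle eq_sym xx0 dotvv_ge0.
set s := vnorm x.
have s_gt0 : 0 < s by rewrite sqrtr_gt0.
have ss : s * s = dotv x x by rewrite -expr2 sqr_sqrtr ?dotvv_ge0.
have y1 : vnorm (s^-1 *: x) = 1.
  have ss1 : s^-1 * (s^-1 * (s * s)) = 1 by field; rewrite gt_eqF.
  by rewrite /vnorm dotvZl dotvZr -ss ss1 sqrtr1.
have := dotv_mulmx_le_opnorm_unit y1.
rewrite -scalemxAr dotvZl dotvZr -ss => unit_bound.
have -> : dotv x (H *m x) = s * s * (s^-1 * (s^-1 * dotv x (H *m x))).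
  by field; rewrite gt_eqF.
by rewrite [_ * (s * s)]mulrC ler_pM2l ?mulr_gt0.
Qed.

End OperatorNorm.

Lemma gt0_of_lt_div1r (R : realFieldType) (e x : R) : 0 < e -> e < 1 / x -> 0 < x.
Proof.
move=> e_gt0 e_lt; rewrite ltNge; apply/negP => x_le0.
have : 1 / x <= 0 by rewrite mul1r invr_le0.
by move/(lt_le_trans (lt_trans e_gt0 e_lt)); rewrite ltxx.
Qed.

Section PolynomialsInH.
Variables (R : realType) (n : nat) (H : 'M[R]_n.+1).
Hypothesis H_sym : H^T = H.
Implicit Types (p q s : {poly R}) (x : 'cV[R]_n.+1).

Lemma trmx_horner_mx p : (horner_mx H p)^T = horner_mx H p.
Proof.
elim/poly_ind: p => [|p c IH]; first by rewrite rmorph0 trmx0.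
rewrite rmorphD rmorphM /= horner_mx_X horner_mx_C linearD /= trmx_mul IH H_sym.
by rewrite tr_scalar_mx (comm_mx_horner p (comm_mx_refl H)).
Qed.

Lemma dotv_horner_mx p q x :
  dotv (horner_mx H p *m x) (horner_mx H q *m x) = dotv x (horner_mx H (p * q) *m x).
Proof. by rewrite rmorphM /= -mulmxE -mulmxA [RHS]dotv_mulmxr trmx_horner_mx. Qed.

Lemma dotv_horner_mxD p q x :
  dotv x (horner_mx H (p + q) *m x)
  = dotv x (horner_mx H p *m x) + dotv x (horner_mx H q *m x).
Proof. by rewrite rmorphD /= mulmxDl dotvDr. Qed.

Lemma dotv_horner_mxB p q x :
  dotv x (horner_mx H (p - q) *m x)
  = dotv x (horner_mx H p *m x) - dotv x (horner_mx H q *m x).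
Proof. by rewrite rmorphB /= mulmxBl dotvBr. Qed.

Lemma dotv_horner_mxZ k p x :
  dotv x (horner_mx H (k%:P * p) *m x) = k * dotv x (horner_mx H p *m x).
Proof. by rewrite rmorphM /= horner_mx_C -mulmxE mul_scalar_mx -scalemxAl dotvZr. Qed.

Lemma mulmx_horner_mx p x : H *m (horner_mx H p *m x) = horner_mx H ('X * p) *m x.
Proof. by rewrite rmorphM /= horner_mx_X -mulmxE mulmxA. Qed.

Definition psd_horner p := forall x, 0 <= dotv x (horner_mx H p *m x).

Lemma psd_horner1 : psd_horner 1.
Proof. by move=> x; rewrite rmorph1 mul1mx dotvv_ge0. Qed.

Lemma psd_hornerD p q : psd_horner p -> psd_horner q -> psd_horner (p + q).
Proof. by move=> psd_p psd_q x; rewrite dotv_horner_mxD addr_ge0. Qed.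

Lemma psd_hornerZ k p : 0 <= k -> psd_horner p -> psd_horner (k%:P * p).
Proof. by move=> k_ge0 psd_p x; rewrite dotv_horner_mxZ mulr_ge0. Qed.

Lemma psd_horner_conj s p : psd_horner p -> psd_horner (s * p * s).
Proof.
move=> psd_p x; rewrite !rmorphM /= -!mulmxE -!mulmxA dotv_mulmxr trmx_horner_mx.
exact: psd_p.
Qed.

Lemma psd_horner_sqr s : psd_horner (s * s).
Proof. by have := psd_horner_conj s psd_horner1; rewrite mulr1. Qed.

Lemma psd_horner_exprM r p :
  psd_horner p -> psd_horner (r * p) -> forall m, psd_horner (r ^+ m * p).
Proof.
move=> psd_p psd_rp.
suff both m : psd_horner (r ^+ m * p) /\ psd_horner (r ^+ m.+1 * p).
  by move=> m; case: (both m).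
elim: m => [|m [IH0 IH1]]; first by rewrite expr0 mul1r expr1.
split=> //; have -> : r ^+ m.+2 * p = r * (r ^+ m * p) * r by rewrite !exprS; ring.
exact: psd_horner_conj.
Qed.

End PolynomialsInH.

Lemma psd_horner_opnorm_subX (R : realType) n (H : 'M[R]_n.+1) :
  0 < opnorm H -> psd_horner H ((opnorm H)%:P - 'X).
Proof.
move=> b_gt0 x; rewrite rmorphB /= horner_mx_C horner_mx_X mulmxBl mul_scalar_mx.
by rewrite dotvBr dotvZr subr_ge0 dotv_mulmx_le_opnorm.
Qed.

Fixpoint gd_poly (R : realType) (a eta : R) (t : nat) : {poly R} :=
  if t is t'.+1 then (1 - eta%:P * 'X) * gd_poly a eta t' + eta%:P else a%:P.

Lemma gd_iterE (R : realType) n (H : 'M[R]_n.+1) (g : 'cV[R]_n.+1) a eta t :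
  gd_iter H g (- a *: g) eta t = - (horner_mx H (gd_poly a eta t) *m g).
Proof.
elim: t => [|t IH] /=; first by rewrite horner_mx_C mul_scalar_mx scaleNr.
rewrite IH /gradf rmorphD rmorphM rmorphB rmorph1 /= !horner_mx_C.
rewrite rmorphM /= horner_mx_C horner_mx_X.
rewrite -!mulmxE !mulmxDl mul1mx !mulNmx !mul_scalar_mx -!scalemxAl -!mulmxA mulmxN.
by apply/matrixP => i j; rewrite !mxE; ring.
Qed.

Lemma gradf_horner_mx (R : realType) n (H : 'M[R]_n.+1) (g : 'cV[R]_n.+1) c :
  gradf H g (- (horner_mx H c *m g)) = horner_mx H (1 - 'X * c) *m g.
Proof.
rewrite /gradf rmorphB rmorph1 rmorphM /= horner_mx_X -mulmxE.
by rewrite mulmxBl mul1mx mulmxN mulmxA addrC.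
Qed.

Lemma gd_residual (R : realType) (a eta : R) t :
  1 - 'X * gd_poly a eta t = (1 - eta%:P * 'X) ^+ t * (1 - a%:P * 'X).
Proof.
elim: t => [|t IH] /=; first by rewrite expr0 mul1r mulrC.
by rewrite exprS -mulrA -IH; ring.
Qed.

Section Descent.
Variables (R : realType) (n : nat) (H : 'M[R]_n.+1) (b a eta : R).
Hypotheses (H_sym : H^T = H) (psd_b : psd_horner H (b%:P - 'X)).
Hypotheses (a_ge0 : 0 <= a) (eta_ge0 : 0 <= eta) (eta_b : eta * b <= 1).

Let r : {poly R} := 1 - eta%:P * 'X.

Lemma psd_horner_step p :
  psd_horner H p -> psd_horner H ((b%:P - 'X) * p) -> psd_horner H (r * p).
Proof.
move=> psd_p psd_bp.
have -> : r * p = eta%:P * ((b%:P - 'X) * p) + (1 - eta * b)%:P * p.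
  by rewrite /r polyCB polyCM polyC1; ring.
by apply: psd_hornerD; apply: psd_hornerZ; rewrite ?subr_ge0.
Qed.

Lemma psd_horner_gd_poly p t :
  psd_horner H p -> psd_horner H ((b%:P - 'X) * p) ->
  psd_horner H (gd_poly a eta t * r ^+ t * p).
Proof.
move=> psd_p psd_bp.
have psd_rp := psd_horner_exprM H_sym psd_p (psd_horner_step psd_p psd_bp).
suff gen k : psd_horner H (gd_poly a eta t * r ^+ k * p) by [].
elim: t k => [|t IH] k /=; first by rewrite -mulrA; apply: psd_hornerZ.
have -> : (r * gd_poly a eta t + eta%:P) * r ^+ k * p
        = gd_poly a eta t * r ^+ k.+1 * p + eta%:P * (r ^+ k * p).
  by rewrite exprS; ring.
by apply: psd_hornerD; [apply: IH | apply: psd_hornerZ].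
Qed.

Lemma dotv_horner_mx_descent t x :
  0 <= dotv x (horner_mx H (gd_poly a eta t * (1 - 'X * gd_poly a eta t)) *m x) ->
  0 <= dotv x
         (horner_mx H (gd_poly a eta t * (b%:P - 'X) * (1 - 'X * gd_poly a eta t)) *m x).
Proof.
rewrite gd_residual -/r; set c := gd_poly a eta t => cu_ge0.
have psd_c : psd_horner H (c * r ^+ t * 1).
  by apply: psd_horner_gd_poly; [exact: psd_horner1 | rewrite mulr1].
have psd_cb : psd_horner H (c * r ^+ t * (b%:P - 'X)).
  exact: psd_horner_gd_poly psd_b (psd_horner_sqr H_sym _).
have [ab_le1|ab_gt1] := lerP (a * b) 1.
  have -> : c * (b%:P - 'X) * (r ^+ t * (1 - a%:P * 'X))
      = a%:P * ((b%:P - 'X) * (c * r ^+ t * 1) * (b%:P - 'X))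
        + (1 - a * b)%:P * (c * r ^+ t * (b%:P - 'X)).
    by rewrite polyCB polyCM polyC1; ring.
  apply: psd_hornerD; last by apply: psd_hornerZ; rewrite ?subr_ge0.
  by apply: psd_hornerZ => //; apply: psd_horner_conj.
have a_gt0 : 0 < a.
  by rewrite lt_neqAle a_ge0 andbT; apply: contraTneq ab_gt1 => <-; rewrite mul0r ltr10.
rewrite -(pmulr_rge0 _ a_gt0) -dotv_horner_mxZ.
have -> : a%:P * (c * (b%:P - 'X) * (r ^+ t * (1 - a%:P * 'X)))
    = (1 - a%:P * 'X) * (c * r ^+ t * 1) * (1 - a%:P * 'X)
      + (a * b - 1)%:P * (c * (r ^+ t * (1 - a%:P * 'X))).
  by rewrite polyCB polyCM polyC1; ring.
rewrite dotv_horner_mxD dotv_horner_mxZ addr_ge0 //; first exact: psd_horner_conj.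
by rewrite mulr_ge0 // subr_ge0 ltW.
Qed.

End Descent.

Theorem lemma4 (R : realType) (n : nat) (H : 'M[R]_n) (g v1 : 'cV[R]_n)
  (lam eta alpha : R) (t : nat) :
  H^T = H ->
  (* lam = lambda_min(H) < 0, with unit eigenvector v1 *)
  eigenvalue H lam ->
  (forall mu : R, eigenvalue H mu -> lam <= mu) ->
  lam < 0 ->
  vnorm v1 = 1 ->
  H *m v1 = lam *: v1 ->
  dotv g v1 != 0 ->
  0 < eta -> eta < 1 / opnorm H ->
  0 < alpha -> alpha < 1 ->
  alpha * `|dotv g (H *m g)| < vnorm g ^+ 3 ->
  (forall s : nat, (s <= t)%N ->
     vnorm (gd_iter H g (- (alpha / vnorm g) *: g) eta s) <= 1) ->
  dotv (gd_iter H g (- (alpha / vnorm g) *: g) eta t)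
       (gradf H g (gd_iter H g (- (alpha / vnorm g) *: g) eta t)) <= 0 ->
  dotv (gd_iter H g (- (alpha / vnorm g) *: g) eta t)
       (H *m gradf H g (gd_iter H g (- (alpha / vnorm g) *: g) eta t))
  >= opnorm H * dotv (gd_iter H g (- (alpha / vnorm g) *: g) eta t)
       (gradf H g (gd_iter H g (- (alpha / vnorm g) *: g) eta t)).
Proof.
case: n H g v1 => [|n] H g v1 H_sym _ _ _ v1_unit _ _ eta_gt0 eta_lt alpha_gt0 _ _ _.
  by move: v1_unit; rewrite [v1]flatmx0 /vnorm dotv0r sqrtr0 => /esym/eqP; rewrite oner_eq0.
have b_gt0 := gt0_of_lt_div1r eta_gt0 eta_lt.
rewrite ltr_pdivlMr // in eta_lt.
have a_ge0 : 0 <= alpha / vnorm g by rewrite divr_ge0 ?sqrtr_ge0 ?ltW.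
have descent := dotv_horner_mx_descent H_sym (psd_horner_opnorm_subX b_gt0) a_ge0
  (ltW eta_gt0) (ltW eta_lt) (x := g).
rewrite gd_iterE gradf_horner_mx mulmx_horner_mx !dotvNl !dotv_horner_mx //.
rewrite oppr_le0 mulrN lerN2 => /descent; rewrite -subr_ge0 -dotv_horner_mxZ -dotv_horner_mxB.
by congr (0 <= dotv g (horner_mx H _ *m g)); ring.
Qed.
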